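(* Let $X$ be a triangulable space, $G$ a subgroup of $\operatorname{Homeo}(X)$, $\varphi:X\to\mathbb{R}^k$ continuous, and $(\bar C,\partial)$ a $G$-chain subcomplex of the singular chain complex $(S(X),\partial)$ over a field $\mathbb{K}$ satisfying property $( * )$. Let $\bar\varphi$ be the filtering function on $\bar C$ induced by $\varphi$. Then for every $n\in\mathbb{Z}$ and every $u,v\in\mathbb{R}^k$ with $u\prec v$, the persistent Betti number $\rho^{\bar\varphi}_n(u,v)$ of $(\bar C,\partial)$ with respect to $\bar\varphi$ is finite.
   Context: Order on $\mathbb{R}^k$: $u\preceq v$ iff $u_j\le v_j$ for all $j$; $u\prec v$ iff $u_j<v_j$ for all $j$. $X^{\varphi\preceq u}=\{x\in X:\varphi(x)\preceq u\}$. $G\subseteq\operatorname{Homeo}(X)$ acts on $S(X)$ by $g(\sigma)=g\circ\sigma$ on singular simplices, extended linearly. A $G$-chain subcomplex $\bar C$ of $S(X)$ is a chain subcomplex such that each $g\in G$ restricts to a chain isomorphism $\bar C\to\bar C$. For a subspace $Y\subseteq X$, $\bar C\cap S(Y)$ denotes the chain complex whose $n$-chains are the singular $n$-chains in $Y$ belonging to $\bar C_n$. Property $( * )$: whenever $X',X''$ are closed subsets of $X$ with $X'\subseteq\operatorname{int}(X'')$, there is a subspace $\hat X$ with $X'\subseteq\hat X\subseteq X''$ such that $H_n(\bar C\cap S(\hat X))$ is finitely generated for every $n\ge 0$. Induced filtering function: $\bar\varphi(0)=(-\infty,\ldots,-\infty)$; for a non-null chain $c=\sum_{r=1}^m a^r\sigma_{j_r}$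 written in reduced form (distinct singular simplices, all $a^r\neq0$), $\bar\varphi(c)=(u_1,\ldots,u_k)$ where $u_i$ is the maximum of $\varphi_i$ on $\bigcup_r\sigma_{j_r}(\Delta_n)$. For $u\prec v$, $\rho^{\bar\varphi}_n(u,v)$ is the rank of the image of $H_n(\bar C^{\bar\varphi\preceq u})\to H_n(\bar C^{\bar\varphi\preceq v})$ induced by inclusion, where $\bar C^{\bar\varphi\preceq u}_n=\{c\in\bar C_n:\bar\varphi(c)\preceq u\}$ (equivalently $\bar C\cap S(X^{\varphi\preceq u})$). *)

From Stdlib Require Import Reals ClassicalEpsilon.
From HB Require Import structures.
From mathcomp Require Import all_boot all_algebra.

Set Implicit Arguments.
Unset Strict Implicit.
Unset Printing Implicit Defensive.

Definition eucl_open_in (I : finType) (P : (I -> R) -> Prop)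
  (U : (I -> R) -> Prop) : Prop :=
  forall t, P t -> U t ->
    exists eps, Rlt 0 eps /\
      forall s, P s -> (forall j, Rlt (Rabs (Rminus (s j) (t j))) eps) -> U s.

Definition Rsum (I : finType) (t : I -> R) : R := \big[Rplus/R0]_(j : I) t j.

Definition in_simplex (I : finType) (t : I -> R) : Prop :=
  (forall j, Rle R0 (t j)) /\ Rsum t = R1.

Definition Delta (n : nat) := {t : 'I_n.+1 -> R | in_simplex t}.

(* the face map delta_i : R^{n+1} -> R^{n+2}, inserting 0 at position i *)
Definition insert0 (n : nat) (i : 'I_n.+2) (t : 'I_n.+1 -> R) : 'I_n.+2 -> R :=
  fun j => match unlift i j with Some j' => t j' | None => R0 end.

(* points of the polyhedron |Kc| of a finite abstract simplicial complex Kc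
   on the vertex set V (barycentric coordinates) *)
Definition poly_pt (V : finType) (Kc : {set {set V}}) (t : V -> R) : Prop :=
  in_simplex t /\ exists S, S \in Kc /\ forall v, t v <> R0 -> v \in S.

Definition is_simplicial_complex (V : finType) (Kc : {set {set V}}) : Prop :=
  forall S, S \in Kc -> forall S' : {set V}, S' \subset S -> S' != set0 -> S' \in Kc.

Definition decP (P : Prop) : bool :=
  if excluded_middle_informative P then true else false.

Section Space.
Variable X : Type.
Variable openX : (X -> Prop) -> Prop.

Definition is_topology : Prop :=
  openX (fun _ => True) /\ openX (fun _ => False) /\
  (forall F : (X -> Prop) -> Prop, (forall U, F U -> openX U) ->
      openX (fun x => exists U, F U /\ U x)) /\
  (forall U W, openX U -> openX W -> openX (fun x => U x /\ W x)).

Definition closedX (Y : X -> Prop) : Prop := openX (fun x => ~ Y x).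

Definition interiorX (Y : X -> Prop) (x : X) : Prop :=
  exists U, openX U /\ U x /\ forall y, U y -> Y y.

Definition contX (g : X -> X) : Prop :=
  forall U, openX U -> openX (fun x => U (g x)).

Definition is_homeo (g : X -> X) : Prop :=
  contX g /\ exists h, contX h /\ (forall x, h (g x) = x) /\ (forall x, g (h x) = x).

Definition is_subgroup_Homeo (G : (X -> X) -> Prop) : Prop :=
  (forall g, G g -> is_homeo g) /\ G (fun x => x) /\
  (forall g h, G g -> G h -> G (fun x => g (h x))) /\
  (forall g, G g -> exists h, G h /\ (forall x, h (g x) = x) /\ (forall x, g (h x) = x)).

Definition triangulable : Prop :=
  exists (V : finType) (Kc : {set {set V}}) (h : X -> V -> R) (hi : (V -> R) -> X),
    is_simplicial_complex Kc /\
    (forall x, poly_pt Kc (h x)) /\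
    (forall x, hi (h x) = x) /\
    (forall t, poly_pt Kc t -> h (hi t) = t) /\
    (forall U, eucl_open_in (poly_pt Kc) U -> openX (fun x => U (h x))) /\
    (forall W, openX W -> eucl_open_in (poly_pt Kc) (fun t => W (hi t))).

Definition cont_Rk (k : nat) (phi : X -> 'I_k -> R) : Prop :=
  forall U, eucl_open_in (fun _ => True) U -> openX (fun x => U (phi x)).

Definition sing_cont (n : nat) (s : Delta n -> X) : Prop :=
  forall W, openX W -> forall t : Delta n, W (s t) ->
    exists eps, Rlt 0 eps /\ forall t' : Delta n,
      (forall j, Rlt (Rabs (Rminus (proj1_sig t' j) (proj1_sig t j))) eps) -> W (s t').

Definition Sing (n : nat) := {s : Delta n -> X | sing_cont s}.

Definition is_face (n : nat) (i : 'I_n.+2) (sg : Sing n.+1) (tau : Sing n) : Prop :=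
  forall (t : Delta n) (s : Delta n.+1),
    proj1_sig s = insert0 i (proj1_sig t) -> proj1_sig tau t = proj1_sig sg s.

Variable K : fieldType.

(* n-chains over K: coefficient functions (finite support is imposed separately) *)
Definition Chain (n : nat) := Sing n -> K.

Definition finsupp (n : nat) (c : Chain n) : Prop :=
  exists s : seq (Sing n), forall sg, c sg <> 0%R -> List.In sg s.

Definition supp (n : nat) (c : Chain n) : seq (Sing n) :=
  epsilon (inhabits [::])
    (fun s => List.NoDup s /\ forall sg, c sg <> 0%R -> List.In sg s).

Definition bd (n : nat) (c : Chain n.+1) : Chain n :=
  fun tau => (\sum_(i < n.+2) (-1) ^+ i *
               \sum_(sg <- supp c) (if decP (is_face i sg tau) then c sg else 0))%R.

Definition is_cycle (n : nat) : Chain n -> Prop :=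
  match n as m return Chain m -> Prop with
  | 0 => fun _ => True
  | m.+1 => fun c => bd c = (fun _ => 0%R)
  end.

(* action of g on chains: g(sum a_r sigma_r) = sum a_r (g o sigma_r) *)
Definition push (g : X -> X) (n : nat) (c : Chain n) : Chain n :=
  fun tau => (\sum_(sg <- supp c)
     (if decP (forall t, proj1_sig tau t = g (proj1_sig sg t)) then c sg else 0))%R.

Definition is_chain_subcomplex (Cb : forall n, Chain n -> Prop) : Prop :=
  forall n,
    Cb n (fun _ => 0%R) /\
    (forall c d, Cb n c -> Cb n d -> Cb n (fun sg => c sg + d sg)%R) /\
    (forall (a : K) c, Cb n c -> Cb n (fun sg => a * c sg)%R) /\
    (forall c, Cb n c -> finsupp c) /\
    (forall c : Chain n.+1, Cb n.+1 c -> Cb n (bd c)).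

(* each g in G restricts to a chain isomorphism Cb -> Cb *)
Definition is_G_subcomplex (G : (X -> X) -> Prop) (Cb : forall n, Chain n -> Prop) : Prop :=
  is_chain_subcomplex Cb /\
  forall g, G g -> forall n,
    (forall c, Cb n c -> Cb n (push g c)) /\
    (forall c c', Cb n c -> Cb n c' -> push g c = push g c' -> c = c') /\
    (forall d, Cb n d -> exists c, Cb n c /\ push g c = d) /\
    (forall c : Chain n.+1, Cb n.+1 c -> bd (push g c) = push g (bd c)).

Definition restrict (Cb : forall n, Chain n -> Prop) (Y : X -> Prop) :
  forall n, Chain n -> Prop :=
  fun n c => Cb n c /\ forall sg, c sg <> 0%R -> forall t, Y (proj1_sig sg t).

(* A ⊆ B chain subcomplexes: the image of H_n(A) -> H_n(B) is finite-dimensional,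
   i.e. finitely many n-cycles of A span every n-cycle of A modulo boundaries of B. *)
Definition finite_image (A B : forall n, Chain n -> Prop) (n : nat) : Prop :=
  exists (m : nat) (zs : 'I_m -> Chain n),
    (forall i, A n (zs i) /\ is_cycle (zs i)) /\
    forall z, A n z -> is_cycle z ->
      exists (a : 'I_m -> K) (b : Chain n.+1),
        B n.+1 b /\ forall tau, z tau = (\sum_(i < m) a i * zs i tau + bd b tau)%R.

Definition property_star (Cb : forall n, Chain n -> Prop) : Prop :=
  forall X' X'' : X -> Prop, closedX X' -> closedX X'' ->
    (forall x, X' x -> interiorX X'' x) ->
    exists Yh : X -> Prop, (forall x, X' x -> Yh x) /\ (forall x, Yh x -> X'' x) /\
      forall n, finite_image (restrict Cb Yh) (restrict Cb Yh) n.

End Space.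

Definition sublevel (X : Type) (k : nat) (phi : X -> 'I_k -> R) (u : 'I_k -> R) : X -> Prop :=
  fun x => forall j, Rle (phi x j) (u j).

From Pilot Require Import Defs.
From Stdlib Require Import Reals ClassicalEpsilon Classical FunctionalExtensionality PropExtensionality Lra.
From HB Require Import structures.
From mathcomp Require Import all_boot all_algebra ring.
Set Implicit Arguments. Unset Strict Implicit. Unset Printing Implicit Defensive.
Import GRing.Theory.

(* For u ≺ v pick w strictly in between.  Since φ is continuous, X^{φ⪯u} and
   X^{φ⪯w} are closed and the first lies in the interior of the second, so
   property (star) yields Y with X^{φ⪯u} ⊆ Y ⊆ X^{φ⪯w} ⊆ X^{φ⪯v} and
   H_n(C̄ ∩ S(Y)) finite-dimensional.  Every n-cycle of C̄^{φ⪯u} is then a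
   combination of finitely many cycles of C̄ ∩ S(Y) modulo boundaries in C̄^{φ⪯v};
   an exchange argument (Steinitz-style) replaces these cycles by cycles of
   C̄^{φ⪯u} itself, which is the finiteness of ρ_n(u, v). *)

(* Singular simplices form an eqType (classically), so that chains can be
   summed over duplicate-free lists of simplices. *)
Section SingularSimplexEq.
Variables (X : Type) (openX : (X -> Prop) -> Prop) (n : nat).

Definition sing_eqb (x y : Sing openX n) : bool := Defs.decP (x = y).

Lemma sing_eqP : Equality.axiom sing_eqb.
Proof.
move=> x y; rewrite /sing_eqb /Defs.decP.
by case: excluded_middle_informative => h; constructor.
Qed.

HB.instance Definition _ := hasDecEq.Build (Sing openX n) sing_eqP.
End SingularSimplexEq.

Lemma In_mem (T : eqType) (x : T) (s : seq T) : List.In x s <-> x \in s.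
Proof.
elim: s => [|y s IH] //=; rewrite in_cons; split.
- by case=> [->|/IH ->]; rewrite ?eqxx ?orbT.
- by case/orP => [/eqP ->|/IH]; auto.
Qed.

Lemma NoDup_uniq (T : eqType) (s : seq T) : List.NoDup s <-> uniq s.
Proof.
elim: s => [|y s IH] /=; first by split => // _; constructor.
split.
- move=> h; inversion h; subst; apply/andP; split; last exact/IH.
  by apply/negP => /In_mem.
- by case/andP => /negP h1 /IH h2; constructor => // /In_mem.
Qed.

Lemma sum_indep (T : eqType) (K : fieldType) (F : T -> K) (L1 L2 : seq T) :
  uniq L1 -> uniq L2 -> (forall x, (F x != 0)%R -> x \in L1 /\ x \in L2) ->
  (\sum_(x <- L1) F x = \sum_(x <- L2) F x)%R.
Proof.
move=> u1 u2 h.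
have drop0 L : (\sum_(x <- L) F x = \sum_(x <- [seq x <- L | F x != 0%R]) F x)%R.
  rewrite big_filter [RHS]big_mkcond /=; apply: eq_bigr => x _.
  by case: (boolP (F x == 0%R)) => [/eqP ->|].
rewrite (drop0 L1) (drop0 L2); apply: perm_big.
apply: uniq_perm; rewrite ?filter_uniq // => x; rewrite !mem_filter.
by case: (boolP (F x != 0%R)) => //= /h [-> ->].
Qed.

Section FiniteGeneration.
Local Open Scope ring_scope.
Variables (T : Type) (K : fieldType) (S Bd : (T -> K) -> Prop).
(* Bd plays the role of a subspace (the boundaries): closed under e1 - r e2. *)
Hypothesis Bd_comb : forall e1 e2 r, Bd e1 -> Bd e2 -> Bd (fun t => e1 t - r * e2 t).

Definition spanned_mod p (ws : 'I_p -> T -> K) m (zs : 'I_m -> T -> K) (z : T -> K) : Prop :=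
  exists (c : 'I_p -> K) (a : 'I_m -> K) e, Bd e /\
    forall t, z t = \sum_(j < p) c j * ws j t + \sum_(i < m) a i * zs i t + e t.

Definition init_family m (zs : 'I_m.+1 -> T -> K) : 'I_m -> T -> K :=
  fun i => zs (widen_ord (leqnSn m) i).

Definition snoc_family p (ws : 'I_p -> T -> K) (z0 : T -> K) : 'I_p.+1 -> T -> K :=
  fun j => if unlift ord_max j is Some j' then ws j' else z0.

Lemma widen_lift_max q (j : 'I_q) : widen_ord (leqnSn q) j = lift ord_max j.
Proof. by apply: val_inj; rewrite /= /bump leqNgt ltn_ord. Qed.

Lemma drop_generator p (ws : 'I_p -> T -> K) m (zs : 'I_m.+1 -> T -> K) z c a e :
  Bd e -> (forall t, z t = \sum_(j < p) c j * ws j t + \sum_(i < m.+1) a i * zs i t + e t) ->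
  a ord_max = 0 -> spanned_mod ws (init_family zs) z.
Proof.
move=> Be hz a0; exists c, (fun i => a (widen_ord (leqnSn m) i)), e; split => // t.
by rewrite hz big_ord_recr /= a0 mul0r addr0.
Qed.

(* Steinitz exchange: if z0 involves the last generator of zs, that generator
   can be traded for z0. *)
Lemma exchange_generator p (ws : 'I_p -> T -> K) m (zs : 'I_m.+1 -> T -> K)
    z0 c0 a0 e0 z :
  Bd e0 ->
  (forall t, z0 t = \sum_(j < p) c0 j * ws j t + \sum_(i < m.+1) a0 i * zs i t + e0 t) ->
  a0 ord_max != 0 ->
  spanned_mod ws zs z -> spanned_mod (snoc_family ws z0) (init_family zs) z.
Proof.
move=> Be0 hz0 nz [c [a [e [Be hz]]]].
pose r := a ord_max / a0 ord_max.
have ar : a ord_max = r * a0 ord_max by rewrite /r divfK.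
exists (fun j => if unlift ord_max j is Some j' then c j' - r * c0 j' else r).
exists (fun i => a (widen_ord (leqnSn m) i) - r * a0 (widen_ord (leqnSn m) i)).
exists (fun t => e t - r * e0 t); split; first exact: Bd_comb.
have split_sum q (x y : 'I_q -> K) (w : 'I_q -> T -> K) t :
    \sum_(j < q) (x j - r * y j) * w j t
    = \sum_(j < q) x j * w j t - r * \sum_(j < q) y j * w j t.
  by rewrite mulr_sumr -sumrB; apply: eq_bigr => j _; rewrite mulrBl mulrA.
move=> t; rewrite hz big_ord_recr /= big_ord_recr /= /snoc_family unlift_none.
rewrite [in RHS](eq_bigr (fun j => (c j - r * c0 j) * ws j t)); last first.
  by move=> j _; rewrite widen_lift_max liftK.
rewrite split_sum (hz0 t) big_ord_recr /= split_sum /init_family ar.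
ring.
Qed.

Lemma finite_generation m : forall p (ws : 'I_p -> T -> K) (zs : 'I_m -> T -> K),
  (forall j, S (ws j)) -> (forall z, S z -> spanned_mod ws zs z) ->
  exists q (ws' : 'I_q -> T -> K), (forall j, S (ws' j)) /\
    forall z, S z -> exists (c : 'I_q -> K) e,
      Bd e /\ forall t, z t = \sum_(j < q) c j * ws' j t + e t.
Proof.
elim: m => [|m IH] p ws zs Sws span.
  exists p, ws; split => // z /span [c [a [e [Be hz]]]]; exists c, e; split => // t.
  by rewrite hz big_ord0 addr0.
have [[z0 [Sz0 [c0 [a0 [e0 [Be0 [nz hz0]]]]]]] | none] := classic (exists z0, S z0 /\
  exists c0 a0 e0, Bd e0 /\ a0 ord_max != 0 /\
    forall t, z0 t = \sum_(j < p) c0 j * ws j t + \sum_(i < m.+1) a0 i * zs i t + e0 t).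
- apply: (IH _ (snoc_family ws z0) (init_family zs)).
    by move=> j; rewrite /snoc_family; case: unlift.
  by move=> z Sz; apply: exchange_generator Be0 hz0 nz (span z Sz).
- apply: (IH _ ws (init_family zs)) => // z Sz.
  have [c [a [e [Be hz]]]] := span z Sz.
  apply: (drop_generator Be hz); apply/eqP/negPn/negP => nz.
  by apply: none; exists z; split => //; exists c, a, e.
Qed.
End FiniteGeneration.

Section Chains.
Local Open Scope ring_scope.
Variables (X : Type) (openX : (X -> Prop) -> Prop) (K : fieldType).
Local Notation Chain := (Chain openX K).

Lemma supp_spec n (c : Chain n) :
  finsupp c -> uniq (supp c) /\ forall sg, c sg <> 0 -> sg \in supp c.
Proof.
case=> s hs; have [|nd cover] := @epsilon_spec _ (inhabits [::])
  (fun s => List.NoDup s /\ forall sg, c sg <> 0 -> List.In sg s).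
  exists (undup s); split; first exact/NoDup_uniq/undup_uniq.
  by move=> sg /hs /In_mem h; apply/In_mem; rewrite mem_undup.
by split; [apply/NoDup_uniq | move=> sg /cover /In_mem].
Qed.

Lemma sum_over_supp n (c : Chain n) (L : seq (Sing openX n)) (F : Sing openX n -> K) :
  finsupp c -> uniq L -> (forall sg, c sg <> 0 -> sg \in L) ->
  (forall sg, c sg = 0 -> F sg = 0) ->
  \sum_(sg <- supp c) F sg = \sum_(sg <- L) F sg.
Proof.
move=> fc uL cover F0; have [usupp csupp] := supp_spec fc.
apply: sum_indep => // sg nz.
have csg : c sg <> 0 by move=> e; move: nz; rewrite F0 ?eqxx.
by split; [apply: csupp | apply: cover].
Qed.

Lemma bd_on_list n (c : Chain n.+1) (L : seq (Sing openX n.+1)) tau :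
  finsupp c -> uniq L -> (forall sg, c sg <> 0 -> sg \in L) ->
  bd c tau = \sum_(i < n.+2) (-1) ^+ i *
               \sum_(sg <- L) (if Defs.decP (is_face i sg tau) then c sg else 0).
Proof.
move=> fc uL cover; apply: eq_bigr => i _; congr (_ * _).
by apply: sum_over_supp => // sg ->; case: Defs.decP.
Qed.

Definition comb n (c d : Chain n) (a : K) : Chain n := fun sg => c sg + a * d sg.

Lemma comb_support n (c d : Chain n) a sg :
  comb c d a sg <> 0 -> c sg <> 0 \/ d sg <> 0.
Proof.
move=> nz; apply: NNPP => /not_or_and [/NNPP c0 /NNPP d0].
by apply: nz; rewrite /comb c0 d0 mulr0 addr0.
Qed.

Lemma common_support n (c d : Chain n) : finsupp c -> finsupp d ->
  exists L, uniq L /\ forall sg, c sg <> 0 \/ d sg <> 0 -> sg \in L.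
Proof.
move=> [s1 h1] [s2 h2]; exists (undup (s1 ++ s2)); split; first exact: undup_uniq.
by move=> sg [/h1|/h2] /In_mem; rewrite mem_undup mem_cat => ->; rewrite ?orbT.
Qed.

Lemma bd_comb n (c d : Chain n.+1) a tau : finsupp c -> finsupp d ->
  bd (comb c d a) tau = bd c tau + a * bd d tau.
Proof.
move=> fc fd; have [L [uL cover]] := common_support fc fd.
have fcd : finsupp (comb c d a).
  by exists L => sg /comb_support /cover /In_mem.
rewrite (bd_on_list tau fcd uL); last by move=> sg /comb_support /cover.
rewrite (bd_on_list tau fc uL); last by move=> sg nz; apply: cover; left.
rewrite (bd_on_list tau fd uL); last by move=> sg nz; apply: cover; right.
rewrite mulr_sumr -big_split /=; apply: eq_bigr => i _.
rewrite !mulr_sumr -big_split /=; apply: eq_bigr => sg _.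
by case: Defs.decP; rewrite /comb ?mulr0 ?addr0 // mulrDr mulrCA.
Qed.

Definition comb_closed n (P : Chain n -> Prop) : Prop :=
  forall c d a, P c -> P d -> P (comb c d a).

Lemma restrict_comb_closed (Cb : forall n, Chain n -> Prop) (Y : X -> Prop) n :
  is_chain_subcomplex Cb -> comb_closed (restrict Cb Y (n := n)).
Proof.
move=> sub c d a [Cc Yc] [Cd Yd]; have [_ [add [scale _]]] := sub n.
split; first by apply: add => //; apply: scale.
by move=> sg /comb_support [/Yc|/Yd].
Qed.

Lemma restrict_mono (Cb : forall n, Chain n -> Prop) (Y Y' : X -> Prop) n c :
  (forall x, Y x -> Y' x) -> restrict Cb Y (n := n) c -> restrict Cb Y' (n := n) c.
Proof. by move=> YY' [Cc Yc]; split=> // sg /Yc Ysg t; apply: YY'. Qed.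

(* Monotonicity of the image of H_n(A) -> H_n(B): if A ⊆ A' and B' ⊆ B, then
   the image for (A, B) is finite-dimensional as soon as the one for (A', B')
   is, since it is a subspace of the image of the latter in H_n(B). *)
Lemma finite_image_sandwich (A A' B' B : forall n, Chain n -> Prop) n :
  (forall c, A n c -> A' n c) -> (forall b, B' n.+1 b -> B n.+1 b) ->
  comb_closed (B n.+1) -> (forall b, B n.+1 b -> finsupp b) ->
  finite_image A' B' n -> finite_image A B n.
Proof.
move=> AA' BB' Bcomb Bfin [m [zs [Azs span]]].
pose cycles z := A n z /\ is_cycle z.
pose boundaries (e : Chain n) := exists b, B n.+1 b /\ forall t, e t = bd b t.
have bd_closed e1 e2 r : boundaries e1 -> boundaries e2 ->
    boundaries (fun t => e1 t - r * e2 t).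
  move=> [b1 [Bb1 e1b]] [b2 [Bb2 e2b]]; exists (comb b1 b2 (- r)).
  split; first exact: Bcomb.
  move=> t /=; rewrite bd_comb ?e1b ?e2b ?mulNr //; exact: Bfin.
have [|z [Az cz]|q [ws [cyc_ws gen]]] :=
  @finite_generation _ _ cycles boundaries bd_closed m 0 (fun _ _ => 0) zs.
- by case.
- have [a [b [B'b hz]]] := span z (AA' _ Az) cz.
  exists (fun _ => 0), a, (bd b); split; first by exists b; split => //; apply: BB'.
  by move=> t; rewrite hz big_ord0 add0r.
- exists q, ws; split=> [j|z Az cz]; first exact: cyc_ws.
  have [c [e [[b [Bb eb]] hz]]] := gen z (conj Az cz).
  by exists c, b; split=> // t; rewrite hz eb.
Qed.
End Chains.

Lemma finite_pos_lower_bound (I : finType) (F : I -> R) :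
  (forall j, Rlt 0 (F j)) -> exists eps, Rlt 0 eps /\ forall j, Rle eps (F j).
Proof.
move=> Fpos; exists (\big[Rmin/R1]_(j : I) F j).
have : Rlt 0 (\big[Rmin/R1]_(j <- index_enum I) F j) /\
       forall j, j \in index_enum I -> Rle (\big[Rmin/R1]_(i <- index_enum I) F i) (F j).
  elim: (index_enum I) => [|x r [pos low]]; first by rewrite big_nil; split => //; lra.
  rewrite big_cons; split; first exact: Rmin_glb_lt.
  move=> j; rewrite in_cons => /orP [/eqP ->|/low]; first exact: Rmin_l.
  by apply: Rle_trans; apply: Rmin_r.
by case=> pos low; split => // j; apply: low; rewrite mem_index_enum.
Qed.

Lemma open_not_below k (a : 'I_k -> R) :
  eucl_open_in (fun _ => True) (fun y => exists j, Rlt (a j) (y j)).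
Proof.
move=> t _ [j aj]; exists (Rminus (t j) (a j)); split; first lra.
by move=> s _ near; exists j; have /Rabs_def2 := near j; lra.
Qed.

Lemma open_strictly_below k (a : 'I_k -> R) :
  eucl_open_in (fun _ => True) (fun y => forall j, Rlt (y j) (a j)).
Proof.
move=> t _ ta; have [eps [eps_pos eps_low]] :=
  @finite_pos_lower_bound _ (fun j => Rminus (a j) (t j)) (fun j => ltac:(have := ta j; lra)).
exists eps; split => // s _ near j.
by have /Rabs_def2 := near j; have := eps_low j; lra.
Qed.

Section Sublevels.
Variables (X : Type) (openX : (X -> Prop) -> Prop) (k : nat) (phi : X -> 'I_k -> R).
Hypothesis phi_cont : cont_Rk openX phi.

Lemma sublevel_closed (a : 'I_k -> R) : closedX openX (sublevel phi a).
Proof.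
rewrite /closedX.
have -> : (fun x => ~ sublevel phi a x) = (fun x => exists j, Rlt (a j) (phi x j)).
  apply: functional_extensionality => x; apply: propositional_extensionality.
  split; last by case=> j aj below; have := below j; lra.
  move=> above; apply: NNPP => none; apply: above => j.
  by apply: Rnot_lt_le => aj; apply: none; exists j.
exact: (phi_cont (@open_not_below k a)).
Qed.

Lemma sublevel_interior (u w : 'I_k -> R) : (forall j, Rlt (u j) (w j)) ->
  forall x, sublevel phi u x -> interiorX openX (sublevel phi w) x.
Proof.
move=> uw x ux; exists (fun y => forall j, Rlt (phi y j) (w j)); split.
  exact: (phi_cont (@open_strictly_below k w)).
split; first by move=> j; have := ux j; have := uw j; lra.
by move=> y wy j; apply: Rlt_le.
Qed.
End Sublevels.

Theorem mainTheorem2 (X : Type) (openX : (X -> Prop) -> Prop) (K : fieldType)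
  (G : (X -> X) -> Prop) (k : nat) (phi : X -> 'I_k -> R)
  (Cb : forall n, Chain openX K n -> Prop) :
  is_topology openX ->
  triangulable openX ->
  is_subgroup_Homeo openX G ->
  cont_Rk openX phi ->
  is_G_subcomplex G Cb ->
  property_star Cb ->
  forall (n : nat) (u v : 'I_k -> R), (forall j, Rlt (u j) (v j)) ->
    finite_image (restrict Cb (sublevel phi u)) (restrict Cb (sublevel phi v)) n.
Proof.
move=> _ _ _ cont [sub _] star n u v uv.
pose w j := Rdiv (Rplus (u j) (v j)) 2.
have uw j : Rlt (u j) (w j) by have := uv j; rewrite /w; lra.
have wv j : Rle (w j) (v j) by have := uv j; rewrite /w; lra.
have [Y [uY [Yw finY]]] := star _ _ (sublevel_closed cont u) (sublevel_closed cont w)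
  (sublevel_interior cont uw).
apply: (finite_image_sandwich (A' := restrict Cb Y) (B' := restrict Cb Y) _ _ _ _ (finY n)).
- by move=> c; apply: restrict_mono.
- by move=> b; apply: restrict_mono => x /Yw wx j; apply: Rle_trans (wv j).
- exact: restrict_comb_closed.
- by move=> b [Cb_b _]; have [_ [_ [_ [fin _]]]] := sub n.+1; apply: fin.
Qed.
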